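(* In the two-door cascading memoryless setting, every semi-fractional sequence $\pi$ has an integer sequence $\pi'$ such that $\mathbb{E}[\pi']\le\mathbb{E}[\pi]+1$.
   Context: Two cascading memoryless doors with durations: parameters $p_1,p_2\in(0,1)$, $q_1=1-p_1$, $q_2=1-p_2$, and $c>0$. Both doors start closed. A semi-fractional sequence is an infinite alternating sequence $1^{t_1}\,2\,1^{t_2}\,2\,1^{t_3}\,2\cdots$ with real $t_j\ge0$; equivalently it is given by a non-decreasing sequence of reals $0=\pi_0\le\pi_1\le\pi_2\le\cdots$ with $t_j=\pi_j-\pi_{j-1}$. A 1-knock $1^t$ takes $t$ time units and, if door 1 is closed, opens it with probability $1-q_1^t$, independently of everything else. A 2-knock takes $c$ time units and opens door 2 with probability $p_2$ (independently) if door 1 is open at that time, and with probability $0$ otherwise. There is no feedback. The running time is the time at which both doors are open (i.e. the end of the 2-knock that opens door 2; the $i$-th 2-knock ends at time $\pi_i+ci$), and $\mathbb{E}[\pi]$ denotes its expectation. An integer sequence is a semi-fractional sequence with all $\pi_i\in\mathbb{N}$ (equivalently, an ordinary sequence of unit-length knocks on door 1 and knocks on door 2). *)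

From HB Require Import structures.
From mathcomp Require Import all_boot all_order all_algebra.
From mathcomp Require Import all_classical all_reals all_analysis.
Set Implicit Arguments. Unset Strict Implicit. Unset Printing Implicit Defensive.
Import Order.TTheory GRing.Theory Num.Theory.
Local Open Scope ring_scope.

Section Doors.
Variable R : realType.

(* A semi-fractional sequence 1^{t_1} 2 1^{t_2} 2 ... is encoded by its
   cumulative 1-knock times  0 = pi 0 <= pi 1 <= pi 2 <= ...  *)
Definition semi_fractional (pi : nat -> R) : Prop :=
  pi 0%N = 0 /\ forall i, pi i <= pi i.+1.

Definition integer_sequence (pi : nat -> R) : Prop :=
  semi_fractional pi /\ forall i, exists k : nat, pi i = k%:R.

(* Probability that door 1 is open at the j-th 2-knock (j >= 1) for the
   first time, i.e. it was closed at the (j-1)-th 2-knock (1-knock time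
   pi (j-1)) and is open at the j-th (1-knock time pi j):
   q1^{pi_{j-1}} - q1^{pi_j}, with q1 = 1 - p1. *)
Definition door1_first_open (p1 : R) (pi : nat -> R) (j : nat) : R :=
  powR (1 - p1) (pi j.-1) - powR (1 - p1) (pi j).

(* Probability that both doors are open for the first time exactly at the
   end of the i-th 2-knock (i >= 1): door 1 first open at knock j <= i,
   then knocks j..i-1 on door 2 fail and knock i succeeds. *)
Definition success_at (p1 p2 : R) (pi : nat -> R) (i : nat) : R :=
  \sum_(1 <= j < i.+1) door1_first_open p1 pi j * (1 - p2) ^+ (i - j) * p2.

(* The i-th 2-knock ends
   at time pi_i + c i.  If with positive probability the doors never both
   open, the running time is +oo with positive probability and E = +oo
   (note +oo * 0 = 0 in \bar R). *)
Definition expected_time (p1 p2 c : R) (pi : nat -> R) : \bar R :=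
  (\sum_(1 <= i <oo) ((pi i + c * i%:R) * success_at p1 p2 pi i)%:E
   + +oo * (1%:E - \sum_(1 <= i <oo) (success_at p1 p2 pi i)%:E))%E.

End Doors.

From HB Require Import structures.
From mathcomp Require Import all_boot all_order all_algebra.
From mathcomp Require Import all_classical all_reals all_analysis.
From mathcomp Require Import ring lra.
Import Order.TTheory GRing.Theory Num.Theory.
Local Open Scope ring_scope.
Set Implicit Arguments.
Unset Strict Implicit.

(* Round every 1-knock time up, pi'_i = ceil pi_i.  Door 1 then opens no later,
   so the survival function G' of pi' (the probability that door 2 is still
   closed before a given 2-knock) lies below the survival function G of pi,
   while each cost f'_i = pi'_i + c i exceeds f_i = pi_i + c i by at most 1.
   Summation by parts turns the truncated expectation sum_i f_i (G_i - G_(i+1))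
   into sum_i (f_i - f_(i-1)) G_i - f_N G_(N+1); the first sum is monotone in G
   because f is nondecreasing, and the boundary term f_N G_(N+1) is bounded by
   the tail of the series defining E[pi].  If under pi door 2 stays closed
   forever with positive probability, E[pi] = +oo and there is nothing to prove. *)

Lemma sum_by_parts (R : comPzRingType) (f g : nat -> R) N :
  \sum_(1 <= i < N.+1) f i * (g i - g i.+1) =
  \sum_(1 <= i < N.+1) (f i - f i.-1) * g i - f N * g N.+1 + f 0%N * g 1%N.
Proof.
elim: N => [|N IH]; first by rewrite !big_geq //; ring.
by rewrite !(big_nat_recr N.+1) //= IH; ring.
Qed.

Section PartialMean.
Variable R : realFieldType.
Implicit Types (f G : nat -> R) (N M : nat).

Definition partial_mean f G N := \sum_(1 <= i < N.+1) f i * (G i - G i.+1).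

Lemma partial_mean_tail_le f G N M : nondecreasing_seq f -> nonincreasing_seq G ->
  (N <= M)%N -> partial_mean f G N + f N * G N.+1 <= partial_mean f G M + f N * G M.+1.
Proof.
move=> f_nd G_ni NM; rewrite /partial_mean [X in _ <= X + _](@big_cat_nat _ _ _ N.+1) //=.
have tail_ge : f N * (G N.+1 - G M.+1) <= \sum_(N.+1 <= i < M.+1) f i * (G i - G i.+1).
  rewrite -[G N.+1 - _]opprB -telescope_sumr // -sumrN mulr_sumr.
  apply: ler_sum_nat => i /andP[Ni _]; rewrite opprB.
  by rewrite ler_wpM2r ?subr_ge0 ?G_ni // f_nd // ltnW.
lra.
Qed.

Lemma partial_mean_shift_le f f' G G' N :
    f 0%N = 0 -> nondecreasing_seq f -> (forall i, f' i <= f i + 1) ->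
    (forall i, 0 <= G' i) -> nonincreasing_seq G' -> (forall i, G' i <= G i) ->
    G' 1%N <= 1 ->
  partial_mean f' G' N <= partial_mean f G N + f N * G N.+1 + 1.
Proof.
move=> f0 f_nd f'_le G'_ge0 G'_ni G'_le G'1.
have f_ge0 i : 0 <= f i by rewrite -f0 f_nd.
have shift_le : partial_mean f' G' N <= partial_mean (fun i => f i + 1) G' N.
  apply: ler_sum_nat => i _; apply: ler_wpM2r => //.
  by rewrite subr_ge0 G'_ni.
have incr_le : \sum_(1 <= i < N.+1) (f i + 1 - (f i.-1 + 1)) * G' i <=
               \sum_(1 <= i < N.+1) (f i - f i.-1) * G i.
  apply: ler_sum_nat => i _; rewrite opprD addrACA subrr addr0.
  by apply: ler_wpM2l => //; rewrite subr_ge0 f_nd // leq_pred.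
have : 0 <= (f N + 1) * G' N.+1 by rewrite mulr_ge0 // addr_ge0.
move: shift_le incr_le; rewrite /partial_mean !sum_by_parts f0; lra.
Qed.

Lemma partial_mean_tail_le_ub f G L N : nondecreasing_seq f -> 0 <= f N ->
    nonincreasing_seq G -> (forall e, 0 < e -> exists M, G M < e) ->
    (forall M, partial_mean f G M <= L) ->
  partial_mean f G N + f N * G N.+1 <= L.
Proof.
move=> f_nd fN_ge0 G_ni G_inf mean_le; apply/ler_addgt0Pr => e e_gt0.
have [M GM] : exists M, G M < e / (f N + 1).
  by apply: G_inf; rewrite divr_gt0 // ltr_wpDl.
have GM' : G (maxn M N).+1 <= e / (f N + 1).
  by rewrite (le_trans _ (ltW GM)) // G_ni // leqW // leq_maxl.
have tail_le : f N * G (maxn M N).+1 <= e.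
  rewrite (le_trans (ler_wpM2l fN_ge0 GM')) // mulrA ler_pdivrMr ?ltr_wpDl //.
  by rewrite mulrC ler_wpM2l ?(ltW e_gt0) // lerDl.
have := @partial_mean_tail_le f G N (maxn M N) f_nd G_ni (leq_maxr M N).
have := mean_le (maxn M N); lra.
Qed.

End PartialMean.

Section NonnegSeries.
Variable R : realType.
Implicit Types u v : nat -> R.
Local Open Scope ereal_scope.

Lemma nneseries_le_ub u (x : \bar R) m : (forall n, (0 <= u n)%R) ->
  (forall n, \sum_(m <= i < n) (u i)%:E <= x) -> \sum_(m <= i <oo) (u i)%:E <= x.
Proof.
move=> u_ge0 partial_le; apply: lime_le; last exact: nearW.
by apply: is_cvg_ereal_nneg_natsum => n _; rewrite lee_fin.
Qed.

Lemma lee_nneseries_partial u v m : (forall n, (0 <= u n)%R) -> (forall n, (0 <= v n)%R) ->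
  (forall n, \sum_(m <= i < n) (u i)%:E <= \sum_(m <= i < n) (v i)%:E) ->
  \sum_(m <= i <oo) (u i)%:E <= \sum_(m <= i <oo) (v i)%:E.
Proof.
move=> u_ge0 v_ge0 partial_le; apply: lee_lim; last exact: nearW.
- by apply: is_cvg_ereal_nneg_natsum => n _; rewrite lee_fin.
- by apply: is_cvg_ereal_nneg_natsum => n _; rewrite lee_fin.
Qed.

End NonnegSeries.

Section Survival.
Variables (R : realType) (p1 p2 : R).
Hypotheses (hp1 : 0 < p1 < 1) (hp2 : 0 < p2 < 1).
Implicit Types pi : nat -> R.
Local Notation success := (success_at p1 p2).

Definition door1_closed pi n := powR (1 - p1) (pi n).

(* [survival pi n.+1] is the probability that door 2 is still closed after the
   n-th 2-knock: that knock fails if door 1 is still closed, or else with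
   probability [1 - p2]. *)
Fixpoint survival pi n : R :=
  if n is m.+1 then (1 - p2) * survival pi m + p2 * door1_closed pi m else 1.

Lemma survival1 pi : pi 0%N = 0 -> survival pi 1 = 1.
Proof. by move=> pi0; rewrite /= /door1_closed pi0 powRr0; ring. Qed.

Lemma success_atE pi i : pi 0%N = 0 ->
  success pi i = survival pi i - survival pi i.+1.
Proof.
move=> pi0; suff -> : success pi i = p2 * (survival pi i - door1_closed pi i).
  by rewrite /=; ring.
elim: i => [|i IH].
  by rewrite /success_at big_geq // /door1_closed pi0 powRr0 subrr mulr0.
rewrite /success_at big_nat_recr //= subnn expr0.
have -> : \sum_(1 <= j < i.+1) door1_first_open p1 pi j * (1 - p2) ^+ (i.+1 - j) * p2
          = (1 - p2) * success pi i.
  rewrite /success_at big_distrr /=; apply: eq_big_nat => j /andP[_ ji].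
  by rewrite subSn // exprS; ring.
by rewrite IH /door1_first_open /door1_closed /=; ring.
Qed.

Let q1_itv : 0 < 1 - p1 <= 1.
Proof. by case/andP: hp1 => p1_gt0 p1_lt1; apply/andP; split; lra. Qed.

Let p2_itv : 0 <= p2 <= 1.
Proof. by case/andP: hp2 => /ltW -> /ltW. Qed.

Lemma door1_closed_le pi pi' : (forall n, pi n <= pi' n) ->
  forall n, door1_closed pi' n <= door1_closed pi n.
Proof. by move=> pi_le n; apply: ger_powR q1_itv _ _ (pi_le n). Qed.

Lemma door1_closed_nonincr pi : semi_fractional pi -> nonincreasing_seq (door1_closed pi).
Proof.
by case=> _ pi_nd; apply/nonincreasing_seqP => n; apply: ger_powR q1_itv _ _ (pi_nd n).
Qed.

Lemma door1_closed_le_survival pi n : semi_fractional pi ->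
  door1_closed pi n <= survival pi n.
Proof.
move=> hpi; have [pi0 _] := hpi; elim: n => [|n IH].
  by rewrite /= /door1_closed pi0 powRr0.
have Q_ni := door1_closed_nonincr hpi (leqnSn n).
by rewrite /=; case/andP: p2_itv => p2_ge0 p2_le1; nra.
Qed.

Lemma survival_ge0 pi n : semi_fractional pi -> 0 <= survival pi n.
Proof. by move=> hpi; apply: le_trans (door1_closed_le_survival n hpi); exact: powR_ge0. Qed.

Lemma survival_nonincr pi : semi_fractional pi -> nonincreasing_seq (survival pi).
Proof.
move=> hpi; apply/nonincreasing_seqP => n.
have := door1_closed_le_survival n hpi; rewrite /=.
case/andP: p2_itv => p2_ge0 _; nra.
Qed.

Lemma success_at_ge0 pi n : semi_fractional pi -> 0 <= success pi n.
Proof.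
move=> hpi; rewrite success_atE; last by case: hpi.
by rewrite subr_ge0 (survival_nonincr hpi).
Qed.

Lemma survival_le pi pi' n : (forall m, door1_closed pi' m <= door1_closed pi m) ->
  survival pi' n <= survival pi n.
Proof.
move=> Q_le; elim: n => [|n IH] //=; case/andP: p2_itv => p2_ge0 p2_le1.
have := Q_le n; nra.
Qed.

Lemma sum_success_at pi N : pi 0%N = 0 ->
  \sum_(1 <= i < N.+1) success pi i = 1 - survival pi N.+1.
Proof.
move=> pi0; rewrite (eq_big_nat _ _ (fun i _ => success_atE i pi0)).
under eq_bigr => i _ do rewrite -opprB.
by rewrite sumrN telescope_sumr // survival1 // opprB.
Qed.

Lemma partial_success_at_le pi n (x : R) : semi_fractional pi ->
  (forall N, 1 - survival pi N.+1 <= x) -> 0 <= x ->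
  (\sum_(1 <= i < n) (success pi i)%:E <= x%:E)%E.
Proof.
move=> [pi0 _] sum_le x_ge0; case: n => [|N]; first by rewrite big_geq.
by rewrite sumEFin sum_success_at // lee_fin.
Qed.

Lemma nneseries_success_at_le1 pi : semi_fractional pi ->
  (\sum_(1 <= i <oo) (success pi i)%:E <= 1%:E)%E.
Proof.
move=> hpi; apply: nneseries_le_ub => [n|n]; first exact: success_at_ge0.
apply: partial_success_at_le => // N.
by rewrite lerBlDr lerDl (survival_ge0 _ hpi).
Qed.

Lemma nneseries_success_at_le pi pi' : semi_fractional pi -> semi_fractional pi' ->
    (forall n, door1_closed pi' n <= door1_closed pi n) ->
  (\sum_(1 <= i <oo) (success pi i)%:E <= \sum_(1 <= i <oo) (success pi' i)%:E)%E.
Proof.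
move=> hpi hpi' Q_le.
apply: lee_nneseries_partial => [n|n|[|N]]; first exact: success_at_ge0.
- exact: success_at_ge0.
- by rewrite !big_geq.
rewrite !sumEFin !sum_success_at ?(proj1 hpi) ?(proj1 hpi') //.
by rewrite lee_fin lerB // survival_le.
Qed.

Lemma survival_small pi e : semi_fractional pi ->
    (\sum_(1 <= i <oo) (success pi i)%:E = 1%:E)%E -> 0 < e ->
  exists M, survival pi M < e.
Proof.
move=> hpi sum1 e_gt0; have [//|no_M] := pselect (exists M, survival pi M < e).
have e_le M : e <= survival pi M by rewrite leNgt; apply/negP => ?; apply: no_M; exists M.
have : (\sum_(1 <= i <oo) (success pi i)%:E <= (1 - e)%:E)%E.
  apply: nneseries_le_ub => [n|n]; first exact: success_at_ge0.
  apply: partial_success_at_le => // [N|]; first by rewrite lerB.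
  by rewrite subr_ge0 -(survival1 (proj1 hpi)) e_le.
by rewrite sum1 lee_fin; lra.
Qed.

End Survival.

Section ExpectedTime.
Variables (R : realType) (p1 p2 c : R).
Hypotheses (hp1 : 0 < p1 < 1) (hp2 : 0 < p2 < 1) (hc : 0 <= c).
Implicit Types pi : nat -> R.
Local Notation success := (success_at p1 p2).
Local Notation survival := (survival p1 p2).

Definition cost pi i := pi i + c * i%:R.

Lemma cost0 pi : semi_fractional pi -> cost pi 0%N = 0.
Proof. by case=> pi0 _; rewrite /cost pi0 mulr0 addr0. Qed.

Lemma cost_nondecr pi : semi_fractional pi -> nondecreasing_seq (cost pi).
Proof.
case=> _ pi_nd; apply/nondecreasing_seqP => i.
by rewrite /cost lerD // ler_wpM2l // ler_nat.
Qed.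

Lemma cost_ge0 pi i : semi_fractional pi -> 0 <= cost pi i.
Proof. by move=> hpi; rewrite -(cost0 hpi) (cost_nondecr hpi). Qed.

Lemma cost_success_ge0 pi i : semi_fractional pi -> 0 <= cost pi i * success pi i.
Proof. by move=> hpi; rewrite mulr_ge0 ?cost_ge0 ?(success_at_ge0 hp1 hp2). Qed.

Lemma partial_expected_time pi N : pi 0%N = 0 ->
  \sum_(1 <= i < N.+1) (cost pi i * success pi i)%:E =
  (partial_mean (cost pi) (survival pi) N)%:E.
Proof.
move=> pi0; rewrite sumEFin /partial_mean; congr (_%:E).
by apply: eq_bigr => i _; rewrite success_atE.
Qed.

Local Open Scope ereal_scope.

Lemma expected_time_lt1 pi : semi_fractional pi ->
  \sum_(1 <= i <oo) (success pi i)%:E < 1%:E -> expected_time p1 p2 c pi = +oo.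
Proof.
move=> hpi sum_lt1; rewrite /expected_time gt0_mulye ?sube_gt0 // addey //.
rewrite gt_eqF // (@lt_le_trans _ _ 0) //.
by apply: nneseries_ge0 => i _ _; rewrite lee_fin cost_success_ge0.
Qed.

Lemma expected_time_eq1 pi : \sum_(1 <= i <oo) (success pi i)%:E = 1%:E ->
  expected_time p1 p2 c pi = \sum_(1 <= i <oo) (cost pi i * success pi i)%:E.
Proof. by move=> sum1; rewrite /expected_time sum1 subee // mule0 adde0. Qed.

Lemma expected_time_le_add1 pi pi' : semi_fractional pi -> semi_fractional pi' ->
    (forall n, door1_closed p1 pi' n <= door1_closed p1 pi n)%R ->
    (forall n, pi' n <= pi n + 1)%R ->
  (expected_time p1 p2 c pi' <= expected_time p1 p2 c pi + 1%:E)%E.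
Proof.
move=> hpi hpi' Q_le pi'_le.
have := nneseries_success_at_le1 hp1 hp2 hpi; rewrite le_eqVlt => /orP[/eqP sum1|sum_lt1];
  last by rewrite (expected_time_lt1 hpi sum_lt1) addye // leey.
have sum1' : \sum_(1 <= i <oo) (success pi' i)%:E = 1%:E.
  apply/le_anti; rewrite nneseries_success_at_le1 //= -sum1.
  exact: nneseries_success_at_le.
rewrite !expected_time_eq1 //.
set A := \sum_(1 <= i <oo) (cost pi i * _)%:E.
have A_ge0 : 0 <= A by apply: nneseries_ge0 => i _ _; rewrite lee_fin cost_success_ge0.
have [->|A_fin] := eqVneq A +oo; first by rewrite addye // leey.
rewrite -ltey -ge0_fin_numE // in A_fin.
rewrite -(fineK A_fin) -EFinD.
have partial_le M : (partial_mean (cost pi) (survival pi) M <= fine A)%R.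
  rewrite -lee_fin fineK // -partial_expected_time; last by case: hpi.
  by apply: nneseries_lim_ge => i _ _; rewrite lee_fin cost_success_ge0.
apply: nneseries_le_ub => [i|[|N]]; first exact: cost_success_ge0.
  by rewrite big_geq // lee_fin addr_ge0 ?fine_ge0.
rewrite partial_expected_time ?lee_fin; last by case: hpi'.
have cost_le i : (cost pi' i <= cost pi i + 1)%R.
  by rewrite /cost addrAC lerD2r pi'_le.
have survival'1 : (survival pi' 1 <= 1)%R by rewrite survival1 //; case: hpi'.
apply: le_trans (partial_mean_shift_le N (cost0 hpi) (cost_nondecr hpi) cost_le
  (fun i => survival_ge0 hp1 hp2 i hpi') (survival_nonincr hp1 hp2 hpi')
  (fun i => survival_le hp2 i Q_le) survival'1) _.
rewrite lerD2r; apply: partial_mean_tail_le_ub => //.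
- exact: cost_nondecr.
- exact: cost_ge0.
- exact: survival_nonincr.
- by move=> e; apply: survival_small.
Qed.

End ExpectedTime.

Section CeilSequence.
Variable R : realType.
Variable pi : nat -> R.
Hypothesis hpi : semi_fractional pi.

Definition ceil_seq i : R := (Num.ceil (pi i))%:~R.

Lemma ceil_seq_ge i : pi i <= ceil_seq i.
Proof. exact: ceil_ge. Qed.

Lemma ceil_seq_le i : ceil_seq i <= pi i + 1.
Proof. by rewrite /ceil_seq -lerBlDr -[1]/(1%:~R) -rmorphB ltW // ceilB1_lt. Qed.

Lemma integer_ceil_seq : integer_sequence ceil_seq.
Proof.
have [pi0 pi_nd] := hpi.
have pi_ge0 i : 0 <= pi i by rewrite -pi0; apply/(nondecreasing_seqP pi).1.
split; first by split=> [|i]; rewrite /ceil_seq ?pi0 ?ceil0 // ler_int le_ceil.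
move=> i; exists `|Num.ceil (pi i)|%N.
by rewrite natr_absz ger0_norm // ceil_ge0 (lt_le_trans _ (pi_ge0 i)) ?ltrN10.
Qed.

End CeilSequence.

Theorem mainTheorem10 (R : realType) (p1 p2 c : R)
  (hp1 : 0 < p1 < 1) (hp2 : 0 < p2 < 1) (hc : 0 < c)
  (pi : nat -> R) (hpi : semi_fractional pi) :
  exists pi' : nat -> R, integer_sequence pi' /\
    (expected_time p1 p2 c pi' <= expected_time p1 p2 c pi + 1%:E)%E.
Proof.
have hceil := integer_ceil_seq hpi.
have Q_le := door1_closed_le hp1 (ceil_seq_ge pi).
exists (ceil_seq pi); split => //.
exact: (expected_time_le_add1 hp1 hp2 (ltW hc) hpi hceil.1 Q_le (ceil_seq_le pi)).
Qed.
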